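(* Let $\alpha\ge 4$, let $(x,y)$ be an optimal solution of the LP-relaxation, and let $N'$ and the clusters $M_l$ ($l\in N'$) be produced by the clustering procedure below. Then for every $l\in N'$, $Z_l:=\sum_{j\in M_l}y_j\ge\frac{\alpha-1}{\alpha}$.
   Context: Setting: finite set $N$ of locations, capacity $M>0$, demands $d_j\ge0$, integer $k\ge1$, metric costs $c_{ij}$ on $N$ (nonnegative, $c_{ii}=0$, symmetric, triangle inequality). LP-relaxation: minimize $\sum_{i,j}d_jc_{ij}x_{ij}$ s.t. $\sum_{i}x_{ij}=1$ ($j\in N$), $\sum_j d_jx_{ij}\le My_i$ ($i\in N$), $\sum_i y_i\le k$, $0\le x_{ij}\le y_i$, $0\le y_i\le1$. For $j\in N$ let $C_j=\sum_{i\in N}c_{ij}x_{ij}$. Clustering procedure: order the locations as $1,\dots,n$ so that $C_1\le\dots\le C_n$ (ties arbitrary); start with $N'=\emptyset$; for $j=1,\dots,n$ in turn, if there is no $l\in N'$ with $c_{lj}\le 2\alpha C_j$, add $j$ to $N'$. Then for each $j\in N$ let $N'(j)$ be a closest element of $N'$ to $j$ (ties arbitrary), and set $M_l=\{j\in N: N'(j)=l\}$ for $l\in N'$. *)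

From HB Require Import structures.
From mathcomp Require Import all_boot all_order all_algebra.
Set Implicit Arguments. Unset Strict Implicit. Unset Printing Implicit Defensive.
Import Order.TTheory GRing.Theory Num.Theory.
Local Open Scope ring_scope.

Section Defs.
Variables (R : realFieldType) (N : finType).

Definition is_metric (c : N -> N -> R) : Prop :=
  [/\ forall i j, 0 <= c i j, forall i, c i i = 0,
      forall i j, c i j = c j i & forall i j l, c i l <= c i j + c j l].

Definition lp_feasible (M : R) (d : N -> R) (k : nat)
    (x : N -> N -> R) (y : N -> R) : Prop :=
  [/\ forall j, \sum_(i : N) x i j = 1,
      forall i, \sum_(j : N) d j * x i j <= M * y i,
      \sum_(i : N) y i <= k%:R,
      forall i j, 0 <= x i j /\ x i j <= y i
    & forall i, 0 <= y i /\ y i <= 1].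

Definition lp_cost (c : N -> N -> R) (d : N -> R) (x : N -> N -> R) : R :=
  \sum_(i : N) \sum_(j : N) d j * c i j * x i j.

Definition lp_optimal (c : N -> N -> R) (M : R) (d : N -> R) (k : nat)
    (x : N -> N -> R) (y : N -> R) : Prop :=
  lp_feasible M d k x y /\
  forall x' y', lp_feasible M d k x' y' -> lp_cost c d x <= lp_cost c d x'.

Definition Cj (c : N -> N -> R) (x : N -> N -> R) (j : N) : R :=
  \sum_(i : N) c i j * x i j.

Definition valid_order (C : N -> R) (s : seq N) : Prop :=
  perm_eq s (enum N) /\ sorted (fun a b => C a <= C b) s.

Fixpoint greedy (c : N -> N -> R) (C : N -> R) (alpha : R)
    (acc : seq N) (s : seq N) : seq N :=
  match s with
  | [::] => acc
  | j :: s' =>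
      if has (fun l => c l j <= 2 * alpha * C j) acc
      then greedy c C alpha acc s'
      else greedy c C alpha (rcons acc j) s'
  end.

Definition centers (c : N -> N -> R) (C : N -> R) (alpha : R) (s : seq N) :=
  greedy c C alpha [::] s.

(* f j = N'(j): a closest element of N' to j (ties arbitrary) *)
Definition closest_assignment (c : N -> N -> R) (Nprime : seq N)
    (f : N -> N) : Prop :=
  forall j, f j \in Nprime /\ forall l, l \in Nprime -> c (f j) j <= c l j.

End Defs.

From HB Require Import structures.
From mathcomp Require Import all_boot all_order all_algebra.
From mathcomp Require Import lra.
Set Implicit Arguments. Unset Strict Implicit. Unset Printing Implicit Defensive.
Import Order.TTheory GRing.Theory Num.Theory.
Local Open Scope ring_scope.

(* The greedy pass keeps any two centers at distance more than
   [2 alpha max(C_a, C_b)].  Hence every location [i] within [alpha C_l] of a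
   center [l] has [l] as its unique closest center, so [Z_l] is at least the
   LP mass [sum_i x_il] over those [i].  By Markov's inequality applied to the
   distribution [x_.l] of mean cost [C_l], the remaining mass is at most
   [1 / alpha]. *)

Lemma weighted_markov (R : realFieldType) (I : finType) (w v : I -> R) (a : R) :
  (forall i, 0 <= w i) -> (forall i, 0 <= v i) ->
  a * \sum_(i | a * \sum_j v j * w j < v i) w i <= 1.
Proof.
move=> w_ge0 v_ge0; set S := \sum_j v j * w j; set F := \sum_(i | _) w i.
have vw_ge0 i : 0 <= v i * w i by rewrite mulr_ge0.
have S_ge0 : 0 <= S by rewrite sumr_ge0.
have [S_eq0 | S_neq0] := eqVneq S 0.
  suff -> : F = 0 by rewrite mulr0 ler01.
  rewrite /F big1 // => i; rewrite S_eq0 mulr0 => v_gt0.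
  have /eqP := @psumr_eq0P _ _ _ _ (fun j _ => vw_ge0 j) S_eq0 i isT.
  by rewrite mulf_eq0 gt_eqF //= => /eqP.
have S_gt0 : 0 < S by rewrite lt_def S_neq0.
have aSF_le_S : a * S * F <= S.
  rewrite mulr_sumr; apply: le_trans (_ : \sum_(i | a * S < v i) v i * w i <= S).
    by apply: ler_sum => i far_i; rewrite ler_wpM2r // ltW.
  by rewrite [leRHS](bigID (fun i => a * S < v i)) /= lerDl sumr_ge0.
by rewrite -(ler_pM2r S_gt0) mul1r mulrAC.
Qed.

Section GreedyClustering.
Variables (R : realFieldType) (N : finType) (c : N -> N -> R) (C : N -> R)
  (alpha : R).
Hypothesis c_sym : forall i j, c i j = c j i.

Definition separated (a b : N) := 2 * alpha * Num.max (C a) (C b) < c a b.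

Lemma separated_sym a b : separated a b = separated b a.
Proof. by rewrite /separated maxC c_sym. Qed.

Lemma greedy_separated acc s :
  sorted (fun a b => C a <= C b) s ->
  {in acc & s, forall a b, C a <= C b} ->
  {in acc &, forall a b, a != b -> separated a b} ->
  {in greedy c C alpha acc s &, forall a b, a != b -> separated a b}.
Proof.
elim: s acc => [|j s IHs] acc //= s_sorted acc_le acc_sep.
have C_trans : transitive (fun a b => C a <= C b).
  by move=> b a e; apply: le_trans.
move: s_sorted; rewrite path_sortedE // => /andP[/allP j_le s_sorted].
have acc_le_s : {in acc & s, forall a b, C a <= C b}.
  by move=> a b a_acc b_s; rewrite acc_le // inE b_s orbT.
case: ifP => [_ | /negbT/hasPn j_far]; first exact: IHs.
have j_sep a : a \in acc -> separated a j.
  move=> a_acc; rewrite /separated max_r ?acc_le ?mem_head //.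
  by rewrite ltNge j_far.
apply: IHs => //.
- move=> a b; rewrite mem_rcons inE => /predU1P[-> | a_acc] b_s.
    exact: j_le.
  exact: acc_le_s.
- move=> a b; rewrite !mem_rcons !inE.
  move=> /predU1P[-> | a_acc] /predU1P[-> | b_acc]; rewrite ?eqxx //.
  + by move=> _; rewrite separated_sym j_sep.
  + by move=> _; rewrite j_sep.
  + exact: acc_sep.
Qed.

Lemma centers_separated s :
  sorted (fun a b => C a <= C b) s ->
  {in centers c C alpha s &, forall a b, a != b -> separated a b}.
Proof. by move=> s_sorted; apply: greedy_separated. Qed.

Hypothesis c_tri : forall i j l, c i l <= c i j + c j l.

Lemma closest_center_of_near (Nprime : seq N) (f : N -> N) (l i : N) :
  0 <= alpha ->
  {in Nprime &, forall a b, a != b -> separated a b} ->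
  closest_assignment c Nprime f -> l \in Nprime ->
  c i l <= alpha * C l -> f i = l.
Proof.
move=> alpha_ge0 sep closest l_in near_i; apply/eqP/negPn/negP => fi_neq_l.
have [fi_in fi_min] := closest i.
have l_fi_sep : separated l (f i) by apply: sep; rewrite // eq_sym.
suff : c l (f i) <= 2 * alpha * Num.max (C l) (C (f i)).
  by move/(lt_le_trans l_fi_sep); rewrite ltxx.
have dist_fi : c l (f i) <= 2 * alpha * C l.
  have := c_tri l i (f i); have := fi_min l l_in.
  by rewrite (c_sym l i) (c_sym (f i) i); lra.
by apply: le_trans dist_fi _; rewrite ler_wpM2l ?le_max ?lexx ?mulr_ge0.
Qed.

End GreedyClustering.

Theorem lemma1 (R : realFieldType) (N : finType) (M : R) (d : N -> R)
    (k : nat) (c : N -> N -> R) (alpha : R)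
    (x : N -> N -> R) (y : N -> R) (s : seq N) (f : N -> N) :
  0 < M -> (forall j, 0 <= d j) -> (1 <= k)%N -> is_metric c ->
  4 <= alpha ->
  lp_optimal c M d k x y ->
  valid_order (Cj c x) s ->
  closest_assignment c (centers c (Cj c x) alpha s) f ->
  forall l, l \in centers c (Cj c x) alpha s ->
    (alpha - 1) / alpha <= \sum_(j : N | f j == l) y j.
Proof.
move=> _ _ _ [c_ge0 _ c_sym c_tri] alpha_ge4 [[x_col _ _ x_le_y y01] _].
move=> [_ s_sorted] closest l l_center; set C := Cj c x in s_sorted closest l_center *.
have alpha_gt0 : 0 < alpha by lra.
pose far i := alpha * C l < c i l.
have sep := centers_separated (alpha := alpha) c_sym s_sorted.
have near_mass : \sum_(i | ~~ far i) x i l <= \sum_(j | f j == l) y j.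
  rewrite big_mkcond [leRHS]big_mkcond; apply: ler_sum => i _.
  case: ifPn => [near_i | _]; last by case: ifP => // _; case: (y01 i).
  rewrite (closest_center_of_near c_sym c_tri (ltW alpha_gt0) sep closest l_center)
    ?eqxx; first by case: (x_le_y i l).
  by rewrite leNgt; exact: near_i.
have far_mass : alpha * \sum_(i | far i) x i l <= 1.
  apply: (weighted_markov (w := x^~ l) (v := c^~ l)) => [i | i].
    by case: (x_le_y i l).
  exact: c_ge0.
have := x_col l; rewrite (bigID far) /= => mass_split.
rewrite ler_pdivrMr //; nra.
Qed.
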